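(* Every compact Rothberger space is productively weakly Rothberger: if $X$ is compact and Rothberger and $Y$ is weakly Rothberger, then $X\times Y$ is weakly Rothberger.
   Context: All spaces are infinite ${\sf T}_1$ topological spaces. Rothberger: for each sequence $(\mathcal{U}_n)$ of open covers there are $U_n\in\mathcal{U}_n$ with $\{U_n:n\in\mathbb{N}\}$ a cover. Weakly Rothberger: for each sequence $(\mathcal{U}_n)$ of open covers there are $U_n\in\mathcal{U}_n$ with $\bigcup_nU_n$ dense in the space. *)

From Stdlib Require Import List.

Definition set (X : Type) := X -> Prop.

Definition is_topology {X : Type} (op : set X -> Prop) : Prop :=
  op (fun _ => True) /\
  op (fun _ => False) /\
  (forall U V, op U -> op V -> op (fun x => U x /\ V x)) /\
  (forall F : set (set X), (forall U, F U -> op U) ->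
     op (fun x => exists U, F U /\ U x)).

Definition T1_space {X : Type} (op : set X -> Prop) : Prop :=
  forall x y : X, x <> y -> exists U, op U /\ U x /\ ~ U y.

Definition infinite_type (X : Type) : Prop :=
  forall l : list X, exists x, ~ In x l.

Definition open_cover {X : Type} (op : set X -> Prop) (C : set (set X)) : Prop :=
  (forall U, C U -> op U) /\ (forall x, exists U, C U /\ U x).

Definition compact {X : Type} (op : set X -> Prop) : Prop :=
  forall C, open_cover op C ->
    exists l : list (set X), (forall U, In U l -> C U) /\
                             (forall x, exists U, In U l /\ U x).

Definition dense {X : Type} (op : set X -> Prop) (D : set X) : Prop :=
  forall U, op U -> (exists x, U x) -> exists x, U x /\ D x.

Definition rothberger {X : Type} (op : set X -> Prop) : Prop :=
  forall Us : nat -> set (set X), (forall n, open_cover op (Us n)) ->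
    exists U : nat -> set X, (forall n, Us n (U n)) /\
                            (forall x, exists n, U n x).

Definition weakly_rothberger {X : Type} (op : set X -> Prop) : Prop :=
  forall Us : nat -> set (set X), (forall n, open_cover op (Us n)) ->
    exists U : nat -> set X, (forall n, Us n (U n)) /\
                            dense op (fun x => exists n, U n x).

Definition prod_open {X Y : Type} (opX : set X -> Prop) (opY : set Y -> Prop)
  (W : set (X * Y)) : Prop :=
  forall p, W p -> exists U V, opX U /\ opY V /\ U (fst p) /\ V (snd p) /\
    (forall q, U (fst q) -> V (snd q) -> W q).

From Stdlib Require Import List Arith Lia Cantor IndefiniteDescription
  FunctionalExtensionality PropExtensionality.

(* 1. In a compact Rothberger space, a Rothberger selection can be chosen so
      that finitely many of its first terms already cover the space.
   2. Tube lemma for selections: given open covers (W_m) of X * Y and a point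
      y, choose boxes U_m * V_m inside members W_m of W_m with y in V_m such
      that the U_m form a Rothberger selection for X; finitely many U_m (m < M)
      cover X, so V := V_0 /\ ... /\ V_(M-1) is an open neighbourhood of y with
      X * V covered by the chosen W_m.
   3. Split the given sequence of covers of X * Y into countably many
      subsequences by Cantor pairing.  For the k-th subsequence, the tubes of
      step 2 form an open cover of Y; weak Rothberger-ness of Y selects one tube
      V_k per k with dense union, and the selected W's of these tubes meet
      every nonempty basic open box A * B, giving a dense union in X * Y. *)

Lemma open_ext {Y : Type} (opY : set Y -> Prop) (A B : set Y) :
  (forall z, A z <-> B z) -> opY A -> opY B.
Proof.
  intros HAB hA.
  assert (E : A = B).
  { apply functional_extensionality; intro z.
    apply propositional_extensionality; apply HAB. }
  now subst.
Qed.

Lemma open_finite_inter {Y : Type} (opY : set Y -> Prop) (tY : is_topology opY)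
  (V : nat -> set Y) (hV : forall m, opY (V m)) :
  forall M, opY (fun z => forall m, m < M -> V m z).
Proof.
  destruct tY as [hT [_ [hI _]]].
  induction M as [|M IH].
  - eapply open_ext; [|exact hT]. intro z; split; intros; [lia|exact I].
  - eapply open_ext; [|exact (hI _ _ IH (hV M))].
    intro z; split.
    + intros [Hlt HM] m Hm.
      destruct (Nat.eq_dec m M) as [->|]; [exact HM|apply Hlt; lia].
    + intros H; split; auto.
Qed.

Lemma list_index_bound {A : Type} (P : nat -> A -> Prop) (l : list A) :
  (forall a, In a l -> exists m, P m a) ->
  exists M, forall a, In a l -> exists m, m < M /\ P m a.
Proof.
  induction l as [|a l IH]; intros H.
  - exists 0; intros a [].
  - destruct (H a (or_introl eq_refl)) as [m0 Hm0].
    destruct IH as [M HM]; [intros b Hb; apply H; now right|].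
    exists (S (max m0 M)); intros b [<-|Hb].
    + exists m0; split; [lia|exact Hm0].
    + destruct (HM b Hb) as [m [Hm Pm]]; exists m; split; [lia|exact Pm].
Qed.

Lemma compact_rothberger_finite_selection {X : Type} (opX : set X -> Prop)
  (cX : compact opX) (rX : rothberger opX)
  (Us : nat -> set (set X)) (hUs : forall n, open_cover opX (Us n)) :
  exists (U : nat -> set X) (M : nat),
    (forall n, Us n (U n)) /\ (forall x, exists m, m < M /\ U m x).
Proof.
  destruct (rX Us hUs) as [U [HU Hcov]].
  destruct (cX (fun A => exists m, A = U m)) as [l [Hl Hlcov]].
  { split.
    - intros A [m ->]. exact (proj1 (hUs m) _ (HU m)).
    - intro x. destruct (Hcov x) as [n Hn]. exists (U n); eauto. }
  destruct (list_index_bound (fun m A => A = U m) l Hl) as [M HM].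
  exists U, M; split; [exact HU|].
  intro x. destruct (Hlcov x) as [A [HA Ax]].
  destruct (HM A HA) as [m [Hm ->]]. eauto.
Qed.

Lemma tube_selection {X Y : Type} (opX : set X -> Prop) (opY : set Y -> Prop)
  (tY : is_topology opY) (cX : compact opX) (rX : rothberger opX)
  (Ws : nat -> set (set (X * Y)))
  (hWs : forall m, open_cover (prod_open opX opY) (Ws m)) (y : Y) :
  exists (V : set Y) (W : nat -> set (X * Y)),
    opY V /\ V y /\ (forall m, Ws m (W m)) /\
    (forall x z, V z -> exists m, W m (x, z)).
Proof.
  set (box m U V W := opY V /\ V y /\ Ws m W /\
                      forall q, U (fst q) -> V (snd q) -> W q).
  set (Us m U := opX U /\ exists V W, box m U V W).
  assert (hUs : forall m, open_cover opX (Us m)).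
  { intro m; split.
    - intros U [hU _]; exact hU.
    - intro x. destruct (proj2 (hWs m) (x, y)) as [W [HW Wxy]].
      destruct (proj1 (hWs m) W HW (x, y) Wxy)
        as [A [B [hA [hB [Ax [By Hsub]]]]]].
      exists A; split; [|exact Ax]. split; [exact hA|].
      exists B, W; repeat split; auto. }
  destruct (compact_rothberger_finite_selection opX cX rX Us hUs)
    as [U [M [HU Hcov]]].
  destruct (functional_choice
              (fun m VW => box m (U m) (fst VW) (snd VW))) as [f Hf].
  { intro m. destruct (proj2 (HU m)) as [V [W h]]. exists (V, W); exact h. }
  exists (fun z => forall m, m < M -> fst (f m) z), (fun m => snd (f m)).
  split; [|split; [|split]].
  - apply open_finite_inter; [exact tY|]. intro m; apply (Hf m).
  - intros m _; apply (Hf m).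
  - intro m; apply (Hf m).
  - intros x z Hz. destruct (Hcov x) as [m [Hm Ux]].
    exists m. apply (Hf m); [exact Ux|exact (Hz m Hm)].
Qed.

Theorem lemma5p22 (X Y : Type) (opX : set X -> Prop) (opY : set Y -> Prop)
  (tX : is_topology opX) (tY : is_topology opY)
  (t1X : T1_space opX) (t1Y : T1_space opY)
  (infX : infinite_type X) (infY : infinite_type Y)
  (cX : compact opX) (rX : rothberger opX)
  (wY : weakly_rothberger opY) :
  weakly_rothberger (prod_open opX opY).
Proof.
  intros Ws hWs.
  destruct (functional_choice (fun (ky : nat * Y) (VW : set Y * (nat -> set (X * Y))) =>
      opY (fst VW) /\ fst VW (snd ky) /\
      (forall m, Ws (to_nat (fst ky, m)) (snd VW m)) /\
      (forall x z, fst VW z -> exists m, snd VW m (x, z)))) as [T HT].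
  { intros [k y].
    destruct (tube_selection opX opY tY cX rX (fun m => Ws (to_nat (k, m)))
                (fun m => hWs _) y) as [V [W HVW]].
    exists (V, W); exact HVW. }
  set (V k y := fst (T (k, y))). set (W k y := snd (T (k, y))).
  destruct (wY (fun k B => exists y, B = V k y)) as [B [HB Hdense]].
  { intro k; split.
    - intros B' [y ->]. apply (HT (k, y)).
    - intro y. exists (V k y); split; [eauto|apply (HT (k, y))]. }
  destruct (functional_choice (fun k y => B k = V k y) HB) as [yk Hyk].
  exists (fun n => W (fst (of_nat n)) (yk (fst (of_nat n))) (snd (of_nat n))).
  split.
  - intro n. destruct (HT (fst (of_nat n), yk (fst (of_nat n))))
      as [_ [_ [HW _]]].
    specialize (HW (snd (of_nat n))).
    cbn [fst] in HW. rewrite <- surjective_pairing, cancel_to_of in HW.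
    exact HW.
  - (* a nonempty open set contains a box A * B' meeting some selected tube *)
    intros G hG [p Gp].
    destruct (hG p Gp) as [A [B' [hA [hB [Ap [B'p Hsub]]]]]].
    destruct (Hdense B' hB (ex_intro _ _ B'p)) as [b [B'b [k Bkb]]].
    rewrite Hyk in Bkb.
    destruct (HT (k, yk k)) as [_ [_ [_ Htube]]].
    destruct (Htube (fst p) b Bkb) as [m Hm].
    exists (fst p, b). split.
    + apply Hsub; auto.
    + exists (to_nat (k, m)). rewrite cancel_of_to. exact Hm.
Qed.
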